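(* Let $S(n)=(3n+1)/2^{v_2(3n+1)}$ be the odd-to-odd Syracuse map, let $m\ge 0$ be an integer, $q=8m+3$ and $n=64q+57=512m+249$. Then $S^4(n)=648m+317$, so $3S^4(n)+1=8(243m+119)$. Let $w=v_2(243m+119)$. Then $S^5(n)=(243m+119)/2^w$, and $S^5(n)\equiv 57\pmod{64}$ if and only if $243m+119\equiv 57\cdot 2^w\pmod{2^{w+6}}$. For each $w\ge 0$ there is a unique residue class $m\equiv a_w\pmod{2^{w+6}}$, namely $a_w=243^{-1}(57\cdot 2^w-119)\bmod 2^{w+6}$, on which this return occurs with $v_2(243m+119)=w$; these classes are pairwise disjoint and their union has natural density $\sum_{w\ge 0}2^{-(w+6)}=1/32$ in the set of nonnegative integers $m$. Within the class for a given $w$, writing $m=a_w+2^{w+6}t$ ($t\ge 0$), the destination quotient $q'=(S^5(n)-57)/64$ has the form $q'=k_0(w)+243t$ for an integer $k_0(w)$ depending only on $w$; hence $q'\bmod 64$ is exactly uniformly distributed as $t$ ranges over any $64$ consecutive integers.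
   Context: $v_2$ is the $2$-adic valuation; $243^{-1}$ denotes the inverse of $243$ modulo $2^{w+6}$. *)

From Stdlib Require Import ClassicalDescription.
From mathcomp Require Import all_boot all_order all_algebra.
Set Implicit Arguments. Unset Strict Implicit. Unset Printing Implicit Defensive.
Import Order.TTheory GRing.Theory Num.Theory.

Definition syr (n : nat) : nat := (3 * n + 1) %/ 2 ^ (logn 2 (3 * n + 1)).

Definition nstart (m : nat) : nat := 64 * (8 * m + 3) + 57.

Definition modw (w : nat) : nat := 2 ^ (w + 6).

Definition inv243 (w : nat) : nat :=
  odflt 0%N (omap (@nat_of_ord _)
    [pick x : 'I_(modw w) | 243 * x %% modw w == 1 %% modw w]).

Definition a_w (w : nat) : nat :=
  `|(((inv243 w)%:Z * ((57 * 2 ^ w)%:Z - 119%:Z)) %% (modw w)%:Z)%Z|%N.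

Definition qdest (m : nat) : nat := (iter 5 syr (nstart m) - 57) %/ 64.

Definition count_upto (P : nat -> Prop) (N : nat) : nat :=
  \sum_(m < N) (if excluded_middle_informative (P m) then 1 else 0)%N.

Definition has_density (P : nat -> Prop) (d : rat) : Prop :=
  forall eps : rat, (0 < eps)%R -> exists N0 : nat, forall N : nat, (N0 <= N)%N -> (0 < N)%N ->
    (`| (count_upto P N)%:R / N%:R - d | < eps)%R.

From mathcomp Require Import all_boot all_order all_algebra.
From mathcomp Require Import zify ring lra.
From Stdlib Require Import ClassicalDescription.
Set Implicit Arguments. Unset Strict Implicit. Unset Printing Implicit Defensive.
Import Order.TTheory GRing.Theory Num.Theory.

(* Four Syracuse steps are forced: 512m + 249 goes to 648m + 317, and 3(648m + 317) + 1
   = 8(243m + 119), so S^5(n) is the odd part of X = 243m + 119.  With v = v_2(X), the odd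
   part is 57 mod 64 iff X = 57 * 2^v mod 2^(v+6); conversely, since 57 is odd and below 64,
   that congruence for some w already forces v = w.  As 243 is a unit mod 2^(w+6), the m
   returning with v = w form the single class a_w.  Adding 2^(w+6) t to m multiplies out to
   adding 2^w * 64 * 243 t to X, hence 64 * 243 t to S^5(n) and 243 t to q'; and 243 is a
   unit mod 64.  For the density, the classes w < L contain N (1/32 - 2^-L/32) + O(L) of the
   m < N, and every other returning m has 2^L | X, which is one class mod 2^L. *)

Definition odd_part (X : nat) : nat := X %/ 2 ^ logn 2 X.

Lemma logn2_pow2_mul_odd k o : odd o -> logn 2 (2 ^ k * o) = k.
Proof.
move=> o_odd; have o_gt0 : 0 < o by case: o o_odd.
by rewrite lognM ?expn_gt0 // pfactorK // logn_coprime ?coprime2n ?addn0.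
Qed.

Lemma odd_part_pow2_mul_odd k o : odd o -> odd_part (2 ^ k * o) = o.
Proof. by move=> o_odd; rewrite /odd_part logn2_pow2_mul_odd // mulKn ?expn_gt0. Qed.

Lemma odd_partK X : 2 ^ logn 2 X * odd_part X = X.
Proof. by rewrite mulnC divnK // pfactor_dvdnn. Qed.

Lemma odd_part_odd X : 0 < X -> odd (odd_part X).
Proof.
move=> X_gt0; have [o o_odd XE] := pfactor_coprime (isT : prime 2) X_gt0.
by rewrite /odd_part {1}XE mulnK ?expn_gt0 // -coprime2n.
Qed.

Lemma odd_part_pow2_mul k X : 0 < X -> odd_part (2 ^ k * X) = odd_part X.
Proof.
move=> X_gt0; rewrite -{1}(odd_partK X) mulnA -expnD.
by rewrite odd_part_pow2_mul_odd // odd_part_odd.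
Qed.

Lemma odd_part_eqmod X c k :
  (odd_part X = c %[mod 2 ^ k]) <->
  (X = c * 2 ^ logn 2 X %[mod 2 ^ (logn 2 X + k)]).
Proof.
set v := logn 2 X; set o := odd_part X.
rewrite -(odd_partK X) -/v -/o expnD (mulnC c) -!muln_modr.
split=> [-> // | /eqP]; rewrite eqn_pmul2l ?expn_gt0 //; exact: eqP.
Qed.

Lemma logn2_eqmod X c k w : odd c -> c < 2 ^ k ->
  X = c * 2 ^ w %[mod 2 ^ (w + k)] -> logn 2 X = w.
Proof.
move=> c_odd c_lt XE.
have c_small : c * 2 ^ w < 2 ^ (w + k) by rewrite expnD mulnC ltn_pmul2l ?expn_gt0.
rewrite (modn_small c_small) in XE.
have -> : X = 2 ^ w * (2 ^ k * (X %/ 2 ^ (w + k)) + c).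
  by rewrite {1}(divn_eq X (2 ^ (w + k))) XE expnD; ring.
rewrite logn2_pow2_mul_odd // oddD oddM oddX c_odd.
by case: k c_lt {c_small XE} => [|k] //; case: c c_odd.
Qed.

Lemma syr_eq_odd n k o : 3 * n + 1 = 2 ^ k * o -> odd o -> syr n = o.
Proof. by move=> nE; rewrite /syr nE; exact: odd_part_pow2_mul_odd. Qed.

Lemma iter4_syr_nstart m : iter 4 syr (nstart m) = 648 * m + 317.
Proof.
have S1 : syr (nstart m) = 384 * m + 187.
  by apply: (@syr_eq_odd _ 2); [rewrite /nstart; lia | rewrite oddD oddM].
have S2 : syr (384 * m + 187) = 576 * m + 281.
  by apply: (@syr_eq_odd _ 1); [lia | rewrite oddD oddM].
have S3 : syr (576 * m + 281) = 432 * m + 211.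
  by apply: (@syr_eq_odd _ 2); [lia | rewrite oddD oddM].
have S4 : syr (432 * m + 211) = 648 * m + 317.
  by apply: (@syr_eq_odd _ 1); [lia | rewrite oddD oddM].
by rewrite /= S1 S2 S3 S4.
Qed.

Lemma iter5_syr_nstart m : iter 5 syr (nstart m) = odd_part (243 * m + 119).
Proof.
rewrite iterS iter4_syr_nstart.
change (odd_part (3 * (648 * m + 317) + 1) = odd_part (243 * m + 119)).
have -> : 3 * (648 * m + 317) + 1 = 2 ^ 3 * (243 * m + 119) by lia.
by rewrite odd_part_pow2_mul // addn_gt0 orbT.
Qed.

Section ModularInverse.
Variables (a x M : nat).
Hypothesis axM : a * x = 1 %[mod M].

Lemma eqmod_mul_inv m k : (m = x * k %[mod M]) <-> (a * m = k %[mod M]).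
Proof.
split=> mE; first by rewrite -modnMmr mE modnMmr mulnA -modnMml axM modnMml mul1n.
by rewrite -[m]mul1n -modnMml -axM modnMml mulnAC -modnMml mE modnMml mulnC.
Qed.

Lemma eqmod_mul2l m n : (a * m = a * n %[mod M]) <-> (m = n %[mod M]).
Proof.
have xanE : x * (a * n) = n %[mod M].
  by rewrite mulnA (mulnC x) -modnMml axM modnMml mul1n.
by rewrite -eqmod_mul_inv xanE.
Qed.

End ModularInverse.

Lemma modn_inv_exists a M : 0 < a -> coprime a M -> exists x, a * x = 1 %[mod M].
Proof.
move=> a_gt0 /eqP aM1; case: (egcdnP M a_gt0) => x k xE _.
by exists x; rewrite mulnC xE aM1 -modnDml modnMl.
Qed.

Lemma inv243P w : 243 * inv243 w = 1 %[mod modw w].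
Proof.
rewrite /inv243; case: pickP => [y /eqP // | no_inv].
have [x xE] : exists x, 243 * x = 1 %[mod modw w].
  by apply: modn_inv_exists; rewrite // /modw coprimeXr.
have := no_inv (Ordinal (ltn_pmod x (expn_gt0 2 (w + 6)))).
by rewrite /= modnMmr xE eqxx.
Qed.

Lemma a_wE w :
  ((a_w w)%:Z = (inv243 w)%:Z * ((57 * 2 ^ w)%:Z - 119%:Z) %% (modw w)%:Z)%Z.
Proof. by rewrite /a_w gez0_abs // modz_ge0 // eqz_nat -lt0n expn_gt0. Qed.

Lemma a_w_eqmod w : 243 * a_w w + 119 = 57 * 2 ^ w %[mod modw w].
Proof.
apply/eqP; rewrite -(eqz_nat (_ %% _)) -!modz_nat PoszD PoszM a_wE.
rewrite -modzDml modzMmr modzDml mulrA -modzDml -modzMml.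
by rewrite -PoszM modz_nat inv243P -modz_nat modzMml mul1r modzDml subrK.
Qed.

Lemma eqmod_a_w w m :
  (m = a_w w %[mod modw w]) <-> (243 * m + 119 = 57 * 2 ^ w %[mod 2 ^ (w + 6)]).
Proof.
rewrite -(eqmod_mul2l (inv243P w)) -a_w_eqmod.
split=> mE; apply/eqP; [rewrite eqn_modDr | rewrite -(eqn_modDr 119)]; exact/eqP.
Qed.

Lemma return_class_iff w m :
  (iter 5 syr (nstart m) = 57 %[mod 64] /\ logn 2 (243 * m + 119) = w) <->
  m = a_w w %[mod modw w].
Proof.
rewrite iter5_syr_nstart -[64]/(2 ^ 6) odd_part_eqmod eqmod_a_w.
split=> [[mE <-] // | mE].
by have vE := logn2_eqmod (isT : odd 57) (isT : 57 < 2 ^ 6) mE; rewrite vE.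
Qed.

Lemma return_classes_disjoint w1 w2 m :
  m = a_w w1 %[mod modw w1] -> m = a_w w2 %[mod modw w2] -> w1 = w2.
Proof. by move=> /return_class_iff [_ <-] /return_class_iff [_ <-]. Qed.

Lemma iter5_syr_class_shift w t :
  iter 5 syr (nstart (a_w w + modw w * t)) =
  iter 5 syr (nstart (a_w w)) + 243 * 64 * t.
Proof.
have [_ v_a] := (return_class_iff w (a_w w)).2 erefl.
set X := 243 * a_w w + 119 in v_a.
have X_gt0 : 0 < X by rewrite addn_gt0 orbT.
have XE : 2 ^ w * odd_part X = X by rewrite -v_a odd_partK.
rewrite !iter5_syr_nstart -/X.
have -> : 243 * (a_w w + modw w * t) + 119 = 2 ^ w * (odd_part X + 243 * 64 * t).
  by rewrite [RHS]mulnDr XE /X /modw expnD; ring.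
by rewrite odd_part_pow2_mul_odd // oddD odd_part_odd // !oddM andbF.
Qed.

Lemma qdest_class_shift w t : qdest (a_w w + modw w * t) = qdest (a_w w) + 243 * t.
Proof.
have [S_mod _] := (return_class_iff w (a_w w)).2 erefl.
rewrite /qdest iter5_syr_class_shift; set S := iter 5 syr _ in S_mod *.
have S_ge57 : 57 <= S by rewrite -[57]/(57 %% 64) -S_mod leq_mod.
have -> : S + 243 * 64 * t - 57 = S - 57 + 243 * t * 64 by lia.
by rewrite divnDMl.
Qed.

Lemma card_affine_mod_eq1 M a x c r : a * x = 1 %[mod M] -> r < M ->
  #|[set i : 'I_M | (c + a * i) %% M == r]| = 1.
Proof.
move=> axM r_lt; have M_gt0 : 0 < M by apply: leq_ltn_trans r_lt.
set k := r + M - c %% M.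
have ckE : (c + k) %% M = r.
  have -> : c + k = (c %/ M).+1 * M + r.
    by have := ltn_pmod c M_gt0; rewrite {1}(divn_eq c M) /k; lia.
  by rewrite modnMDl modn_small.
have i0_lt : x * k %% M < M by rewrite ltn_pmod.
rewrite -(cards1 (Ordinal i0_lt)); apply: eq_card => i; rewrite !inE.
rewrite -ckE eqn_modDl -val_eqE /=; apply/eqP/eqP=> [aiE | ->].
  by rewrite -(modn_small (ltn_ord i)); apply/(eqmod_mul_inv axM).
by rewrite modnMmr; apply/(eqmod_mul_inv axM).
Qed.

Lemma qdest_uniform w t0 r : r < 64 ->
  #|[set i : 'I_64 | qdest (a_w w + modw w * (t0 + i)) %% 64 == r]| = 1.
Proof.
move=> r_lt; have inv243_64 : 243 * 59 = 1 %[mod 64] by [].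
rewrite -[RHS](card_affine_mod_eq1 (qdest (a_w w) + 243 * t0) inv243_64 r_lt).
by apply: eq_card => i; rewrite !inE qdest_class_shift mulnDr addnA.
Qed.

Definition returns (m : nat) : bool := iter 5 syr (nstart m) == 57 %[mod 64].

Lemma returnsP m : reflect (exists w, m = a_w w %[mod modw w]) (returns m).
Proof.
apply: (iffP eqP) => [ret | [w /return_class_iff []//]].
by exists (logn 2 (243 * m + 119)); apply/return_class_iff.
Qed.

Lemma count_upto_returns N :
  count_upto (fun m => exists w, m = a_w w %[mod modw w]) N = \sum_(m < N) returns m.
Proof.
apply: eq_bigr => m _; case: excluded_middle_informative => [ret | not_ret].
  by rewrite (introT (returnsP m) ret).
by rewrite (introF (returnsP m) not_ret).
Qed.

Lemma eqmod_a_wE w m :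
  (m == a_w w %[mod modw w]) = returns m && (logn 2 (243 * m + 119) == w).
Proof.
apply/eqP/andP => [mE | [/eqP ret /eqP v_m]].
  by have [ret ->] := (return_class_iff w m).2 mE; split; apply/eqP.
exact/return_class_iff.
Qed.

Lemma logn2_ge_eqmod L m : (L <= logn 2 (243 * m + 119)) = (m == a_w L %[mod 2 ^ L]).
Proof.
have dvd_L : 2 ^ L %| modw L by rewrite dvdn_exp2l ?leq_addr.
have inv_L : 243 * inv243 L = 1 %[mod 2 ^ L].
  by rewrite -(modn_dvdm (243 * _) dvd_L) -(modn_dvdm 1 dvd_L) inv243P.
have a_L : 243 * a_w L + 119 = 0 %[mod 2 ^ L].
  by rewrite -(modn_dvdm _ dvd_L) a_w_eqmod modn_dvdm // modnMl mod0n.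
rewrite -pfactor_dvdn ?addn_gt0 ?orbT //.
have -> : (2 ^ L %| 243 * m + 119) =
          (243 * m + 119 == 243 * a_w L + 119 %[mod 2 ^ L]) by rewrite /dvdn a_L mod0n.
by rewrite eqn_modDr; apply/eqP/eqP; rewrite (eqmod_mul2l inv_L).
Qed.

Lemma sum_ord_eqn L v : \sum_(w < L) (v == w :> nat) = (v < L).
Proof.
elim: L => [|L IHL]; first by rewrite big_ord0.
by rewrite big_ord_recr /= IHL ltnS; case: ltngtP.
Qed.

Lemma returns_split L m :
  returns m = \sum_(w < L) (m == a_w w %[mod modw w] : nat)
              + (returns m && (L <= logn 2 (243 * m + 119))) :> nat.
Proof.
under eq_bigr => w _ do rewrite eqmod_a_wE.
by case: (returns m); [rewrite sum_ord_eqn; case: ltnP | rewrite big1].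
Qed.

Definition count_eqmod N a M := \sum_(m < N) (m == a %[mod M] : nat).

Lemma count_eqmodE N a M : 0 < M -> count_eqmod N a M = (N + M - 1 - a %% M) %/ M.
Proof.
move=> M_gt0; have a_lt : a %% M < M by rewrite ltn_pmod.
elim: N => [|N IHN]; first by rewrite /count_eqmod big_ord0 divn_small //; lia.
rewrite /count_eqmod big_ord_recr /= -/(count_eqmod N a M) IHN.
have -> : N.+1 + M - 1 - a %% M = (N + M - 1 - a %% M).+1 by lia.
rewrite divnS // addnC; congr (_ + _).
have -> : (N + M - 1 - a %% M).+1 = N + M - a %% M by lia.
by rewrite -eqn_mod_dvd ?modnDr ?modn_mod //; lia.
Qed.

Lemma count_returns_split N L :
  \sum_(m < N) returns m =
  \sum_(w < L) count_eqmod N (a_w w) (modw w)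
  + \sum_(m < N) (returns m && (L <= logn 2 (243 * m + 119))).
Proof.
under eq_bigr => m _ do rewrite (returns_split L m).
by rewrite big_split exchange_big.
Qed.

Lemma count_returns_tail N L :
  \sum_(m < N) (returns m && (L <= logn 2 (243 * m + 119)))
  <= count_eqmod N (a_w L) (2 ^ L).
Proof. by apply: leq_sum => m _; rewrite logn2_ge_eqmod; case: returns. Qed.

Section CountingBounds.
Local Open Scope ring_scope.
Variable R : realFieldType.

Lemma count_eqmod_bounds N a M : (0 < M)%N ->
  N%:R / M%:R - 1 <= ((count_eqmod N a M)%:R : R) <= N%:R / M%:R + 1.
Proof.
move=> M_gt0; rewrite count_eqmodE //; set q := (_ %/ M)%N.
have a_lt : (a %% M < M)%N by rewrite ltn_pmod.
have q_le : (q * M <= N + M)%N by apply: leq_trans (leq_divM _ M) _; lia.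
have q_gt : (N < q.+1 * M)%N by apply: leq_trans (ltn_ceil _ M_gt0); lia.
have M_gt0' : 0 < M%:R :> R by rewrite ltr0n.
apply/andP; split.
  by rewrite lerBlDr ler_pdivrMr // natr1 -natrM ler_nat ltnW.
rewrite -[X in _ <= _ + X](divff (lt0r_neq0 M_gt0')) -mulrDl ler_pdivlMr //.
by rewrite -natrD -natrM ler_nat.
Qed.

Lemma sum_div_modw N L :
  \sum_(w < L) N%:R / (modw w)%:R = N%:R / 32 - N%:R / ((2 ^ L)%:R * 32) :> R.
Proof.
elim: L => [|L IHL]; first by rewrite big_ord0 expn0 mul1r subrr.
rewrite big_ord_recr /= IHL /modw expnD (expnS 2 L) !natrM.
have pow_neq0 : (2 ^ L)%:R != 0 :> R by rewrite pnatr_eq0 -lt0n expn_gt0.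
by field.
Qed.

Lemma count_returns_near N L :
  `|(\sum_(m < N) returns m)%:R - N%:R / 32| <= L%:R + 1 + N%:R / (2 ^ L)%:R :> R.
Proof.
rewrite (count_returns_split N L) natrD.
set S := (\sum_(w < L) _)%N; set T := (\sum_(m < N) _)%N.
have pow_gt0 : 0 < (2 ^ L)%:R :> R by rewrite ltr0n expn_gt0.
set A := N%:R / (2 ^ L)%:R.
have A_ge0 : 0 <= A by rewrite divr_ge0 ?ler0n ?ltW.
have AE : N%:R / ((2 ^ L)%:R * 32) = A / 32 :> R by rewrite /A; field; rewrite lt0r_neq0.
have sum_L : \sum_(w < L) (1 : R) = L%:R by rewrite sumr_const card_ord.
have S_lo : N%:R / 32 - A / 32 - L%:R <= S%:R :> R.
  rewrite -AE -sum_div_modw -sum_L -sumrB /S natr_sum; apply: ler_sum => w _.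
  by case/andP: (count_eqmod_bounds N (a_w w) (expn_gt0 2 (w + 6))).
have S_hi : S%:R <= N%:R / 32 - A / 32 + L%:R :> R.
  rewrite -AE -sum_div_modw -sum_L -big_split /S natr_sum; apply: ler_sum => w _.
  by case/andP: (count_eqmod_bounds N (a_w w) (expn_gt0 2 (w + 6))).
have T_hi : T%:R <= A + 1 :> R.
  case/andP: (count_eqmod_bounds N (a_w L) (expn_gt0 2 L)) => _; apply: le_trans.
  by rewrite ler_nat count_returns_tail.
have T_ge0 : 0 <= T%:R :> R by rewrite ler0n.
rewrite ler_norml; apply/andP; split; lra.
Qed.

End CountingBounds.

Local Open Scope ring_scope.

Lemma returns_density :
  has_density (fun m => exists w, m = a_w w %[mod modw w]) (1 / 32).
Proof.
move=> eps eps_gt0.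
have [L L_gt] : exists L : nat, 2 / eps < L%:R.
  by exists (Num.bound (2 / eps)); apply: archi_boundP; rewrite divr_ge0 ?ltW.
exists (L * L.+1)%N => N N_ge N_gt0; rewrite count_upto_returns.
set f := (\sum_(m < N) _)%N.
have N_gt0' : 0 < N%:R :> rat by rewrite ltr0n.
have -> : f%:R / N%:R - 1 / 32 = (f%:R - N%:R / 32) / N%:R :> rat.
  by field; rewrite lt0r_neq0.
rewrite normrM normfV (gtr0_norm N_gt0') ltr_pdivrMr //.
apply: le_lt_trans (count_returns_near rat N L) _.
have eps_L : 2 < eps * L%:R by rewrite mulrC -ltr_pdivrMr.
have L_sq : (L%:R + 1) * L%:R <= N%:R :> rat by rewrite natr1 -natrM ler_nat mulnC.
have L_pow : L%:R < (2 ^ L)%:R :> rat by rewrite ltr_nat ltn_expl.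
have pow_gt0 : 0 < (2 ^ L)%:R :> rat by rewrite ltr0n expn_gt0.
have tail_small : 2 * (N%:R / (2 ^ L)%:R) < eps * N%:R :> rat.
  rewrite mulrA ltr_pdivrMr // mulrAC ltr_pM2r //.
  by apply: lt_trans eps_L _; rewrite ltr_pM2l.
have head_small : 2 * (L%:R + 1) < eps * N%:R :> rat.
  apply: lt_le_trans (_ : eps * ((L%:R + 1) * L%:R) <= _); last by rewrite ler_pM2l.
  by rewrite mulrCA mulrC ltr_pM2l // natr1 ltr0n.
lra.
Qed.

Local Close Scope ring_scope.

Theorem mainTheorem8 :
  (forall m : nat, iter 4 syr (nstart m) = 648 * m + 317) /\
  (forall m : nat, 3 * iter 4 syr (nstart m) + 1 = 8 * (243 * m + 119)) /\
  (forall m : nat,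
     iter 5 syr (nstart m) = (243 * m + 119) %/ 2 ^ (logn 2 (243 * m + 119))) /\
  (forall m : nat,
     (iter 5 syr (nstart m) = 57 %[mod 64]) <->
     (243 * m + 119 = 57 * 2 ^ (logn 2 (243 * m + 119))
        %[mod 2 ^ (logn 2 (243 * m + 119) + 6)])) /\
  (forall w m : nat,
     (iter 5 syr (nstart m) = 57 %[mod 64] /\ logn 2 (243 * m + 119) = w) <->
     m = a_w w %[mod modw w]) /\
  (forall w1 w2 m : nat,
     m = a_w w1 %[mod modw w1] -> m = a_w w2 %[mod modw w2] -> w1 = w2) /\
  has_density (fun m => exists w : nat, m = a_w w %[mod modw w]) (1 / 32)%R /\
  (forall w : nat, exists k0 : nat, forall t : nat,
     qdest (a_w w + modw w * t) = k0 + 243 * t) /\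
  (forall w t0 r : nat, r < 64 ->
     #|[set i : 'I_64 | qdest (a_w w + modw w * (t0 + i)) %% 64 == r]| = 1).
Proof.
split; first exact: iter4_syr_nstart.
split; first by move=> m; rewrite iter4_syr_nstart; lia.
split; first exact: iter5_syr_nstart.
split; first by move=> m; rewrite iter5_syr_nstart -[64]/(2 ^ 6) odd_part_eqmod.
split; first exact: return_class_iff.
split; first exact: return_classes_disjoint.
split; first exact: returns_density.
split; first by move=> w; exists (qdest (a_w w)); exact: qdest_class_shift.
exact: qdest_uniform.
Qed.
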